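(* For $\theta>0$ and an integer $n\ge1$, let $K_n(\theta)$ be a random variable with $$P\{K_n(\theta)=k\}=|S_n^k|\frac{\theta^k}{\theta_{(n)}},\quad k=1,\dots,n,$$ where $\theta_{(n)}=\theta(\theta+1)\cdots(\theta+n-1)$ and $|S_n^k|$ is the coefficient of $\theta^k$ in $\theta_{(n)}$, and let $M(t)=E[e^{tK_n(\theta)}]$. Consider the four regimes as $\theta\to\infty$: Case A: $n$ fixed; Case B: $n=n(\theta)\to\infty$ with $\theta/n\to\infty$; Case C: $n=n(\theta)\to\infty$ with $\theta/n\to c\in(0,\infty)$; Case D: $n=n(\theta)\to\infty$ with $\theta/n\to0$. Define $\alpha(\theta)=\log\theta,\ n\log\frac\theta n,\ \theta,\ \theta\log\frac n\theta$ and $\beta(\theta)=\log\theta,\ \log\frac\theta n,\ \frac\theta n,\ 1$ in Cases A, B, C, D respectively. Then for every $t\in\mathbb R$, $$\Lambda(t)=\lim_{\theta\to\infty}\frac{1}{\alpha(\theta)}\log M(\beta(\theta)t)$$ exists and equals, in Cases A, B, C, D respectively, $$\Lambda_1(t)=\begin{cases}nt,&t>-1,\\ (t+1)-n,&\text{else},\end{cases}\qquad \Lambda_2(t)=\begin{cases}t,&t>-1,\\ -1,&\text{else},\end{cases}$$ $$\Lambda_3(t)=\frac1c\Big\{[c\log c-(1+c)\log(1+c)]+[(1+ce^{ct})\log(1+ce^{ct})-ce^{ct}\log(ce^{ct})]\Big\},\qquad \Lambda_4(t)=e^t-1.$$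
   Context: $K_n(\theta)$ is the number of distinct alleles in a random sample of size $n$ from a $PD(\theta)$ population (Ewens sampling formula). *)

From HB Require Import structures.
From mathcomp Require Import all_boot all_order all_algebra.
From mathcomp Require Import all_classical all_reals all_analysis.
Set Implicit Arguments. Unset Strict Implicit. Unset Printing Implicit Defensive.
Import Order.TTheory GRing.Theory Num.Theory.
Local Open Scope ring_scope.

Definition rising {R : realType} (theta : R) (n : nat) : R :=
  \prod_(i < n) (theta + i%:R).

Definition rising_poly (n : nat) : {poly nat} :=
  \prod_(i < n) ('X + (i : nat)%:P).

Definition stirling1 (n k : nat) : nat := nth 0%N (polyseq (rising_poly n)) k.

Definition Kn_pmf {R : realType} (theta : R) (n k : nat) : R :=
  (stirling1 n k)%:R * theta ^+ k / rising theta n.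

Definition Kn_mgf {R : realType} (theta : R) (n : nat) (t : R) : R :=
  \sum_(1 <= k < n.+1) expR (t * k%:R) * Kn_pmf theta n k.

Definition Lambda1 {R : realType} (n : nat) (t : R) : R :=
  if -1 < t then n%:R * t else (t + 1) - n%:R.

Definition Lambda2 {R : realType} (t : R) : R :=
  if -1 < t then t else -1.

Definition Lambda3 {R : realType} (c t : R) : R :=
  c^-1 * ((c * ln c - (1 + c) * ln (1 + c))
          + ((1 + c * expR (c * t)) * ln (1 + c * expR (c * t))
             - c * expR (c * t) * ln (c * expR (c * t)))).

Definition Lambda4 {R : realType} (t : R) : R := expR t - 1.

From HB Require Import structures.
From mathcomp Require Import all_boot all_order all_algebra.
From mathcomp Require Import all_classical all_reals all_analysis.
From mathcomp Require Import zify ring lra.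
Import Order.TTheory GRing.Theory Num.Theory.
Import numFieldNormedType.Exports.
Local Open Scope classical_set_scope.
Local Open Scope ring_scope.

(* Write M(s) = rising (theta e^s) n / rising theta n.  Comparing ln (rising x n)
   with the integral of ln over [x, x + n] gives, uniformly in theta, n and s,
     ln M(s) = n (phi (theta e^s / n) - phi (theta / n)) + O(ln (1 + n / theta)),
   where phi x = (1 + x) ln (1 + x) - x ln x.  Cases B, C and D then follow from
   the behaviour of phi at +oo (phi (e^v) = max(0, v) + O(1)), at the fixed point
   c, and at 0 (phi r = r ln (1 / r) + r + O(r^2)).  In case A the boundary term
   is too large; instead each factor satisfies
     ln (theta^(1+t) + k) - ln (theta + k) = Lambda2 t * ln theta + O(ln (1 + k)). *)

Section RisingFactorial.
Context {R : realType}.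
Implicit Types (x s : R) (n : nat).

Let natR : {rmorphism nat -> R} := GRing.natmul 1.

Lemma map_rising_poly n :
  map_poly natR (rising_poly n) = \prod_(i < n) ('X + i%:R%:P).
Proof.
rewrite /rising_poly rmorph_prod; apply: eq_bigr => i _.
by rewrite rmorphD /= map_polyX map_polyC.
Qed.

Lemma size_map_rising_poly n : size (map_poly natR (rising_poly n)) = n.+1.
Proof.
rewrite map_rising_poly size_prod => [|i _]; last first.
  by rewrite -size_poly_eq0 size_XaddC.
under eq_bigr do rewrite size_XaddC.
by rewrite sum_nat_const card_ord; lia.
Qed.

Lemma rising_stirling1 x n :
  rising x n = \sum_(k < n.+1) (stirling1 n k)%:R * x ^+ k.
Proof.
have -> : rising x n = (map_poly natR (rising_poly n)).[x].
  rewrite map_rising_poly horner_prod; apply: eq_bigr => i _.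
  by rewrite hornerD hornerX hornerC.
rewrite horner_coef size_map_rising_poly; apply: eq_bigr => i _.
by rewrite coef_map.
Qed.

Lemma stirling1_n0 n : (0 < n)%N -> (stirling1 n 0)%:R = 0 :> R.
Proof.
case: n => // n _; have := rising_stirling1 0 n.+1.
rewrite big_ord_recl expr0 mulr1 big1 ?addr0 => [<-|i _]; last first.
  by rewrite expr0n mulr0.
by rewrite /rising big_ord_recl add0r mul0r.
Qed.

Lemma Kn_mgf_rising th s n : (0 < n)%N ->
  Kn_mgf th n s = rising (th * expR s) n / rising th n.
Proof.
move=> n_gt0; rewrite /Kn_mgf /Kn_pmf [in RHS]rising_stirling1 mulr_suml.
rewrite big_ord_recl stirling1_n0 // !mul0r add0r big_add1 big_mkord.
apply: eq_bigr => i _; rewrite exprMn -expRM_natr /=; ring.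
Qed.

Lemma rising_gt0 x n : 0 < x -> 0 < rising x n.
Proof. by move=> x_gt0; apply: prodr_gt0 => i _; rewrite ltr_wpDr. Qed.

Lemma ln_rising x n : 0 < x -> ln (rising x n) = \sum_(i < n) ln (x + i%:R).
Proof.
move=> x_gt0; elim: n => [|n IHn]; first by rewrite /rising !big_ord0 ln1.
rewrite /rising !big_ord_recr lnM ?posrE ?IHn ?ltr_wpDr //.
exact: rising_gt0.
Qed.

End RisingFactorial.

(* [Lambda3 c t = (phi (c * expR (c * t)) - phi c) / c]. *)
Definition phi {R : realType} (x : R) : R := (1 + x) * ln (1 + x) - x * ln x.

Section LnRisingBounds.
Context {R : realType}.
Implicit Types x y : R.

Definition ln_primitive x : R := x * ln x - x.

Lemma ln_primitive_step y : 0 < y ->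
  ln y <= ln_primitive (y + 1) - ln_primitive y <= ln (y + 1).
Proof.
move=> y_gt0; rewrite /ln_primitive.
have yV_gt0 : 0 < y^-1 by rewrite invr_gt0.
have y1V_lt1 : (y + 1)^-1 < 1 by rewrite invf_lt1 //; lra.
have y1V_gt0 : 0 < (y + 1)^-1 by rewrite invr_gt0; lra.
have up : y * ln (1 + y^-1) <= 1.
  rewrite -[leRHS](@mulfV _ y) ?gt_eqF // ler_pM2l //.
  by apply: le_ln1Dx; lra.
have down : (y + 1) * ln (1 - (y + 1)^-1) <= -1.
  have : (y + 1) * ln (1 - (y + 1)^-1) <= (y + 1) * - (y + 1)^-1.
    by rewrite ler_pM2l; [apply: le_ln1Dx|]; lra.
  by rewrite mulrN mulfV // gt_eqF //; lra.
have e1 : ln (y + 1) = ln y + ln (1 + y^-1).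
  by rewrite -lnM ?posrE; [congr ln; field; lra|lra|lra].
have e2 : ln y = ln (y + 1) + ln (1 - (y + 1)^-1).
  by rewrite -lnM ?posrE; [congr ln; field; lra|lra|lra].
have {}e1 : y * ln (1 + y^-1) = y * ln (y + 1) - y * ln y by rewrite e1; ring.
have {}e2 : (y + 1) * ln (1 - (y + 1)^-1) = (y + 1) * ln y - (y + 1) * ln (y + 1).
  by rewrite [in RHS]e2; ring.
apply/andP; split; nra.
Qed.

Lemma ln_rising_bounds x n : 0 < x ->
  ln_primitive (x + n%:R) - ln_primitive x - (ln (x + n%:R) - ln x)
  <= ln (rising x n) <= ln_primitive (x + n%:R) - ln_primitive x.
Proof.
move=> x_gt0; rewrite ln_rising //; elim: n => [|n IHn].
  by rewrite big_ord0 addr0 !subrr lexx.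
rewrite big_ord_recr /= -natr1 addrA.
have /andP[lo hi] := ln_primitive_step _ (ltr_wpDr (ler0n R n) x_gt0).
by move: IHn => /andP[IHlo IHhi]; apply/andP; split; lra.
Qed.

Lemma ln_primitiveD N x : 0 < N -> 0 < x ->
  ln_primitive (x + N) - ln_primitive x = N * (ln N - 1 + phi (x / N)).
Proof.
move=> N_gt0 x_gt0; rewrite /ln_primitive /phi.
have r_gt0 : 0 < x / N by rewrite divr_gt0.
have -> : ln (x + N) = ln N + ln (1 + x / N).
  by rewrite -lnM ?posrE; [congr ln; field; lra|lra|lra].
have -> : ln x = ln N + ln (x / N).
  by rewrite -lnM ?posrE; [congr ln; field; lra|lra|lra].
have : N * (x / N) = x by field; lra.
move: (x / N) => r <-; ring.
Qed.

Lemma ln_Kn_mgf_bounds (th s : R) n : 0 < th -> (0 < n)%N ->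
  n%:R * (phi (th * expR s / n%:R) - phi (th / n%:R))
    - ln (1 + (th * expR s / n%:R)^-1)
  <= ln (Kn_mgf th n s) <=
  n%:R * (phi (th * expR s / n%:R) - phi (th / n%:R))
    + ln (1 + (th / n%:R)^-1).
Proof.
move=> th_gt0 n_gt0.
have N_gt0 : 0 < n%:R :> R by rewrite ltr0n.
have a_gt0 : 0 < th * expR s by rewrite mulr_gt0 ?expR_gt0.
have boundary y : 0 < y -> ln (y + n%:R) - ln y = ln (1 + (y / n%:R)^-1).
  move=> y_gt0; rewrite -ln_div ?posrE; [|lra|lra].
  by congr ln; field; rewrite !gt_eqF.
rewrite Kn_mgf_rising // ln_div ?posrE ?rising_gt0 //.
move: (ln_rising_bounds _ n a_gt0) (ln_rising_bounds _ n th_gt0).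
rewrite !ln_primitiveD // !boundary // => /andP[a_lo a_hi] /andP[th_lo th_hi].
apply/andP; split; nra.
Qed.

End LnRisingBounds.

Section ElementaryBounds.
Context {R : realType}.
Implicit Types a k r t v x y : R.

Lemma ln_addr_bounds a k : 0 < a -> 1 <= k ->
  Num.max 0 (ln a) <= ln (a + k) <= Num.max 0 (ln a) + ln (1 + k).
Proof.
move=> a_gt0 k_ge1; have [a_le1|a_ge1] := lerP a 1.
- rewrite max_l ?add0r; last exact: ln_le0.
  by apply/andP; split; [apply: ln_ge0|rewrite ler_ln ?posrE]; lra.
- rewrite max_r -?lnM ?posrE; [|lra|lra|by apply: ln_ge0; lra].
  by apply/andP; split; rewrite ler_ln ?posrE; nra.
Qed.

Lemma ln1DexpR_bounds v :
  Num.max 0 v <= ln (1 + expR v) <= Num.max 0 v + ln 2.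
Proof.
have := ln_addr_bounds _ _ (expR_gt0 v) (lexx (1 : R)).
by rewrite expRK addrC.
Qed.

Lemma phi_bounds x : 0 < x -> ln (1 + x) <= phi x <= ln (1 + x) + 1.
Proof.
move=> x_gt0; rewrite /phi.
have xV_gt0 : 0 < x^-1 by rewrite invr_gt0.
have -> : (1 + x) * ln (1 + x) - x * ln x = ln (1 + x) + x * ln (1 + x^-1).
  have -> : ln (1 + x) = ln x + ln (1 + x^-1).
    by rewrite -lnM ?posrE; [congr ln; field; lra|lra|lra].
  ring.
have : 0 <= x * ln (1 + x^-1) <= 1.
  rewrite mulr_ge0 ?ln_ge0 /=; try lra.
  rewrite -[leRHS](@mulfV _ x) ?gt_eqF // ler_pM2l //.
  by apply: le_ln1Dx; lra.
by move=> /andP[lo hi]; apply/andP; split; lra.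
Qed.

Lemma phi_expR_bounds v :
  Num.max 0 v <= phi (expR v) <= Num.max 0 v + ln 2 + 1.
Proof.
have /andP[lo hi] := phi_bounds _ (expR_gt0 v).
have /andP[lo' hi'] := ln1DexpR_bounds v.
by apply/andP; split; lra.
Qed.

Lemma xlnx_1D_bounds x : 0 < x -> 0 <= (1 + x) * ln (1 + x) - x <= x ^+ 2.
Proof.
move=> x_gt0; have x1_gt0 : 0 < 1 + x by lra.
have ln_le : ln (1 + x) <= x by apply: le_ln1Dx; lra.
have ln_ge : x / (1 + x) <= ln (1 + x).
  have : ln (1 - x / (1 + x)) <= - (x / (1 + x)).
    have : x / (1 + x) < 1 by rewrite ltr_pdivrMr //; lra.
    by move=> ?; apply: le_ln1Dx; lra.
  have -> : 1 - x / (1 + x) = (1 + x)^-1 by field; lra.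
  by rewrite lnV ?posrE //; lra.
rewrite subr_ge0 expr2; apply/andP; split.
  by rewrite -ler_pdivrMl // mulrC.
by rewrite lerBlDl; nra.
Qed.

Lemma ln1DV_mulr_le r y : 0 < r -> r <= 1 -> 0 < y ->
  ln (1 + (r * y)^-1) <= ln (1 + y^-1) + ln r^-1.
Proof.
move=> r_gt0 r_le1 y_gt0.
have rV_ge1 : 1 <= r^-1 by rewrite invf_ge1.
have yV_gt0 : 0 < y^-1 by rewrite invr_gt0.
have rV_gt0 : 0 < r^-1 by lra.
have ryV_gt0 : 0 < (r * y)^-1 by rewrite invfM; nra.
rewrite -lnM ?posrE ?ler_ln ?posrE ?invfM; try nra.
Qed.

Lemma max0_Lambda2 y t : 0 <= y -> Num.max 0 ((1 + t) * y) - y = Lambda2 t * y.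
Proof.
move=> y_ge0; rewrite /Lambda2; case: ltrP => [t_gt|t_le].
- by rewrite max_r ?mulr_ge0 //; [ring|lra].
- by rewrite max_l ?mulr_le0_ge0 //; [ring|lra].
Qed.

Lemma Lambda1S m t : Lambda1 m.+1 t = t + m%:R * Lambda2 t.
Proof. by rewrite /Lambda1 /Lambda2 -natr1; case: ifP => _; ring. Qed.

End ElementaryBounds.

Section LimitTools.
Context {R : realType} {T : Type} {F : set_system T} {FF : Filter F}.
Implicit Types (f b : T -> R) (a c l : R).

Lemma cvg_dist_bound f b l :
  (\forall x \near F, `|f x - l| <= b x) -> b x @[x --> F] --> 0 ->
  f x @[x --> F] --> l.
Proof.
move=> fb /cvgr0Pnorm_le b0; apply/cvgrPdistC_le => e e_gt0.
apply: filterS2 fb (b0 e e_gt0) => x fb bx.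
exact: le_trans fb (le_trans (ler_norm _) bx).
Qed.

Lemma cvgy_ln [f] : f x @[x --> F] --> +oo -> ln (f x) @[x --> F] --> +oo.
Proof.
move=> /cvgryPge fy; apply/cvgryPge => A.
apply: filterS (fy (expR A)) => x Afx.
have fx_gt0 : 0 < f x by apply: lt_le_trans Afx; exact: expR_gt0.
by rewrite -[A]expRK ler_ln ?posrE ?expR_gt0.
Qed.

Lemma cvgy_inv [f] : f x @[x --> F] --> +oo -> (f x)^-1 @[x --> F] --> 0.
Proof. by move=> fy; apply/gtr0_cvgV0 => //; exact: cvgry_gt fy 0. Qed.

Lemma cvgy_divr [f] c : f x @[x --> F] --> +oo -> c / f x @[x --> F] --> 0.
Proof.
by move=> fy; rewrite -(mulr0 c); apply: cvgM; [exact: cvg_cst|exact: cvgy_inv].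
Qed.

Lemma cvg_ln [f] a : 0 < a -> f x @[x --> F] --> a -> ln (f x) @[x --> F] --> ln a.
Proof. by move=> a_gt0; apply: continuous_cvg; exact: continuous_ln. Qed.

Lemma cvg_phi [f] a : 0 < a -> f x @[x --> F] --> a -> phi (f x) @[x --> F] --> phi a.
Proof.
move=> a_gt0 fa; apply: cvgB; apply: cvgM => //.
- by apply: cvgD => //; exact: cvg_cst.
- by apply: cvg_ln; [lra|apply: cvgD => //; exact: cvg_cst].
- exact: cvg_ln.
Qed.

End LimitTools.

Lemma ler_dist_div (R : realFieldType) (x D l B : R) :
  0 < D -> `|x - D * l| <= B -> `|x / D - l| <= B / D.
Proof.
move=> D_gt0 h; have -> : x / D - l = (x - D * l) / D by field; rewrite gt_eqF.
by rewrite normrM normfV (gtr0_norm D_gt0) ler_pM2r ?invr_gt0.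
Qed.

Section FixedSampleSize.
Context {R : realType}.

Lemma ln_rising_factor_bound (th t k : R) : 1 <= th -> 1 <= k ->
  `|ln (expR ((1 + t) * ln th) + k) - ln (th + k) - Lambda2 t * ln th|
  <= ln (1 + k).
Proof.
move=> th_ge1 k_ge1; have y_ge0 : 0 <= ln th by rewrite ln_ge0.
have /andP[a_lo a_hi] := ln_addr_bounds _ _ (expR_gt0 ((1 + t) * ln th)) k_ge1.
have /andP[b_lo b_hi] := ln_addr_bounds _ _ (lt_le_trans ltr01 th_ge1) k_ge1.
rewrite expRK in a_lo a_hi; rewrite max_r // in b_lo b_hi.
by rewrite -max0_Lambda2 // ler_norml; apply/andP; split; lra.
Qed.

Lemma ln_Kn_mgf_fixed_n (th t : R) n : 1 < th -> (0 < n)%N ->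
  `|ln (Kn_mgf th n (ln th * t)) / ln th - Lambda1 n t|
  <= n%:R * ln (1 + n%:R) / ln th.
Proof.
case: n => // m th_gt1 _; set D := ln (1 + m.+1%:R).
have th_gt0 : 0 < th by lra.
have a_gt0 : 0 < th * expR (ln th * t) by rewrite mulr_gt0 ?expR_gt0.
have D_ge0 : 0 <= D by rewrite ln_ge0 // lerDl.
apply: ler_dist_div; first by rewrite ln_gt0.
rewrite Kn_mgf_rising // ln_div ?posrE ?rising_gt0 // !ln_rising //.
have -> : th * expR (ln th * t) = expR ((1 + t) * ln th).
  by rewrite mulrDl mul1r expRD lnK ?posrE // (mulrC t).
rewrite -sumrB big_ord_recl /= !addr0 expRK Lambda1S.
set S := \sum_(i < m) _.
have S_bound : `|S - \sum_(i < m) Lambda2 t * ln th| <= m%:R * D.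
  rewrite -sumrB (le_trans (ler_norm_sum _ _ _)) //.
  rewrite mulr_natl -[m in D *+ m]card_ord -sumr_const; apply: ler_sum => i _.
  apply: (le_trans (ln_rising_factor_bound th t _ (ltW th_gt1) _)).
    by rewrite ler1n.
  rewrite /D ler_ln ?posrE ?ltr_wpDr // lerD2l ler_nat.
  by have := ltn_ord i; rewrite /bump; lia.
move: S_bound; rewrite sumr_const card_ord -mulr_natl ler_norml => /andP[lo hi].
rewrite ler_norml -natr1; apply/andP; split; nra.
Qed.

Lemma Kn_mgf_limit_fixed_n n (t : R) : (0 < n)%N ->
  (ln (Kn_mgf theta n (ln theta * t)) / ln theta) @[theta --> +oo]
    --> Lambda1 n t.
Proof.
move=> n_gt0.
apply: (cvg_dist_bound _ (fun th => n%:R * ln (1 + n%:R) / ln th)).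
  near=> th; apply: ln_Kn_mgf_fixed_n => //.
exact/cvgy_divr/cvgy_ln/cvg_id.
Unshelve. all: by end_near.
Qed.

End FixedSampleSize.

Section SlowlyGrowingSampleSize.
Context {R : realType}.

Lemma ln_Kn_mgf_slow_n (th t : R) n : 0 < th -> (0 < n)%N ->
  0 < ln (th / n%:R) ->
  `|ln (Kn_mgf th n (ln (th / n%:R) * t)) / (n%:R * ln (th / n%:R)) - Lambda2 t|
  <= (2 * ln 2 + 1) / ln (th / n%:R) + `|1 + t| / n%:R.
Proof.
move=> th_gt0 n_gt0; set L := ln (th / n%:R) => L_gt0.
have N_gt0 : 0 < n%:R :> R by rewrite ltr0n.
have r_eq : th / n%:R = expR L by rewrite lnK // posrE divr_gt0.
have := ln_Kn_mgf_bounds th (L * t) n th_gt0 n_gt0.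
have -> : th * expR (L * t) / n%:R = expR ((1 + t) * L).
  by rewrite mulrAC r_eq -expRD; congr expR; ring.
rewrite r_eq -!expRN => /andP[lo hi].
have /andP[P_lo P_hi] := phi_expR_bounds ((1 + t) * L).
have /andP[Q_lo Q_hi] := phi_expR_bounds L.
have /andP[e1_lo e1_hi] := ln1DexpR_bounds (- ((1 + t) * L)).
have /andP[e2_lo e2_hi] := ln1DexpR_bounds (- L).
have L_ge0 : 0 <= L by lra.
rewrite max_r // in Q_lo Q_hi; rewrite max_l ?oppr_le0 // in e2_lo e2_hi.
have e1_max : Num.max 0 (- ((1 + t) * L)) <= `|1 + t| * L.
  rewrite ge_max mulr_ge0 //= -mulNr ler_wpM2r //.
  by rewrite -normrN ler_norm.
have PQ : `|phi (expR ((1 + t) * L)) - phi (expR L) - Lambda2 t * L| <= ln 2 + 1.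
  by rewrite -max0_Lambda2 // ler_norml; apply/andP; split; lra.
have nPQ : `|n%:R * (phi (expR ((1 + t) * L)) - phi (expR L)) - n%:R * L * Lambda2 t|
    <= n%:R * (ln 2 + 1).
  by rewrite mulrAC -mulrA -mulrBr normrM gtr0_norm // ler_wpM2l // ltW.
have ln2_ge0 : 0 <= ln 2 :> R by rewrite ln_ge0 //; lra.
have N_ge1 : 1 <= n%:R :> R by rewrite ler1n.
have ln2_le : ln 2 <= ln 2 * n%:R :> R by nra.
have max_ge0 : 0 <= Num.max 0 (- ((1 + t) * L)) by rewrite le_max lexx.
have -> : (2 * ln 2 + 1) / L + `|1 + t| / n%:R
    = ((2 * ln 2 + 1) * n%:R + `|1 + t| * L) / (n%:R * L).
  by field; rewrite !gt_eqF.
apply: ler_dist_div; first exact: mulr_gt0.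
by move: nPQ; rewrite !ler_norml => /andP[? ?]; apply/andP; split; lra.
Qed.

Lemma Kn_mgf_limit_slow_n (n : R -> nat) :
  ((n theta)%:R : R) @[theta --> +oo] --> +oo ->
  (theta / (n theta)%:R) @[theta --> +oo] --> +oo ->
  forall t : R,
  (ln (Kn_mgf theta (n theta) (ln (theta / (n theta)%:R) * t))
     / ((n theta)%:R * ln (theta / (n theta)%:R)))
    @[theta --> +oo] --> Lambda2 t.
Proof.
move=> n_oo r_oo t.
have L_oo : ln (theta / (n theta)%:R) @[theta --> +oo] --> +oo by exact: cvgy_ln.
apply: (cvg_dist_bound _ (fun th => (2 * ln 2 + 1) / ln (th / (n th)%:R)
                                    + `|1 + t| / (n th)%:R)).
  near=> th; apply: ln_Kn_mgf_slow_n.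
  - by near: th; exact: nbhs_pinfty_gt.
  - by rewrite -(ltr0n R); near: th; exact: cvgry_gt n_oo 0.
  - by near: th; exact: cvgry_gt L_oo 0.
by rewrite -[X in _ --> X](addr0 0); apply: cvgD; exact: cvgy_divr.
Unshelve. all: by end_near.
Qed.

End SlowlyGrowingSampleSize.

Section ProportionalSampleSize.
Context {R : realType}.

Lemma ln_Kn_mgf_div_bounds (th s : R) n : 0 < th -> (0 < n)%N ->
  (phi (th / n%:R * expR s) - phi (th / n%:R)) / (th / n%:R)
    - ln (1 + (th / n%:R * expR s)^-1) / th
  <= ln (Kn_mgf th n s) / th <=
  (phi (th / n%:R * expR s) - phi (th / n%:R)) / (th / n%:R)
    + ln (1 + (th / n%:R)^-1) / th.
Proof.
move=> th_gt0 n_gt0; have N_gt0 : 0 < n%:R :> R by rewrite ltr0n.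
have := ln_Kn_mgf_bounds th s n th_gt0 n_gt0; rewrite mulrAC => /andP[lo hi].
have split_div X Y : (n%:R * X + Y) / th = X / (th / n%:R) + Y / th.
  by field; rewrite !gt_eqF.
have thV_gt0 : 0 < th^-1 by rewrite invr_gt0.
by apply/andP; split; rewrite -?mulNr -split_div ler_pM2r.
Qed.

Lemma Kn_mgf_limit_proportional_n (n : R -> nat) (c : R) : 0 < c ->
  ((n theta)%:R : R) @[theta --> +oo] --> +oo ->
  (theta / (n theta)%:R) @[theta --> +oo] --> c ->
  forall t : R,
  (ln (Kn_mgf theta (n theta) ((theta / (n theta)%:R) * t)) / theta)
    @[theta --> +oo] --> Lambda3 c t.
Proof.
move=> c_gt0 n_oo r_c t.
have p_gt0 : 0 < c * expR (c * t) by rewrite mulr_gt0 ?expR_gt0.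
have p_c : (theta / (n theta)%:R * expR (theta / (n theta)%:R * t))
    @[theta --> +oo] --> c * expR (c * t).
  apply: cvgM => //; apply: (continuous_cvg _ (@continuous_expR R _)).
  by apply: cvgM => //; exact: cvg_cst.
have main : ((phi (theta / (n theta)%:R * expR (theta / (n theta)%:R * t))
             - phi (theta / (n theta)%:R)) / (theta / (n theta)%:R))
    @[theta --> +oo] --> Lambda3 c t.
  have -> : Lambda3 c t = (phi (c * expR (c * t)) - phi c) / c.
    by rewrite /Lambda3 /phi; ring.
  apply: cvgM; first by apply: cvgB; exact: cvg_phi.
  by apply: cvgV => //; rewrite gt_eqF.
have boundary (a : R) (f : R -> R) : 0 < a -> f theta @[theta --> +oo] --> a ->
    ln (1 + (f theta)^-1) / theta @[theta --> +oo] --> 0.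
  move=> a_gt0 fa; rewrite -(mulr0 (ln (1 + a^-1))); apply: cvgM.
  - apply: cvg_ln; first by rewrite addr_gt0 // invr_gt0.
    by apply: cvgD; [exact: cvg_cst|apply: cvgV => //; rewrite gt_eqF].
  - exact/cvgy_inv/cvg_id.
apply: squeeze_cvgr; last 2 first.
- by rewrite -[X in _ --> X]subr0; apply: cvgB; [exact: main|exact: boundary p_c].
- by rewrite -[X in _ --> X]addr0; apply: cvgD; [exact: main|exact: boundary r_c].
near=> th; apply: ln_Kn_mgf_div_bounds.
- by near: th; exact: nbhs_pinfty_gt.
- by rewrite -(ltr0n R); near: th; exact: cvgry_gt n_oo 0.
Unshelve. all: by end_near.
Qed.

End ProportionalSampleSize.

Section FastGrowingSampleSize.
Context {R : realType}.

Lemma phi_mulr_expR_bound (r t : R) : 0 < r -> r <= 1 ->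
  `|phi (r * expR t) - phi r - r * (expR t - 1) * ln r^-1|
  <= (expR t ^+ 2 + 1 + `|expR t - 1 - expR t * t|) * r.
Proof.
move=> r_gt0 r_le1; have E_gt0 := expR_gt0 t.
have rE_gt0 : 0 < r * expR t by rewrite mulr_gt0.
have /andP[A_lo A_hi] := xlnx_1D_bounds _ rE_gt0.
have /andP[B_lo B_hi] := xlnx_1D_bounds _ r_gt0.
have -> : phi (r * expR t) - phi r - r * (expR t - 1) * ln r^-1
    = ((1 + r * expR t) * ln (1 + r * expR t) - r * expR t)
      - ((1 + r) * ln (1 + r) - r) + r * (expR t - 1 - expR t * t).
  by rewrite /phi lnM ?posrE // lnV ?posrE // expRK; ring.
have := ler_norm (expR t - 1 - expR t * t).
have := ler_norm (- (expR t - 1 - expR t * t)); rewrite normrN.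
set x := expR t - 1 - expR t * t => x_lo x_hi.
rewrite ler_norml; apply/andP; split; nra.
Qed.

Lemma ln_Kn_mgf_fast_n (th t : R) n : 0 < th -> (0 < n)%N ->
  0 < ln (n%:R / th) ->
  `|ln (Kn_mgf th n t) / (th * ln (n%:R / th)) - Lambda4 t|
  <= (ln (1 + expR (- t)) + ln 2) / th / ln (n%:R / th) + th^-1
     + (expR t ^+ 2 + 1 + `|expR t - 1 - expR t * t|) / ln (n%:R / th).
Proof.
move=> th_gt0 n_gt0; set L := ln (n%:R / th) => L_gt0.
have N_gt0 : 0 < n%:R :> R by rewrite ltr0n.
set r := th / n%:R; have r_gt0 : 0 < r by rewrite divr_gt0.
have L_eq : L = ln r^-1 by rewrite /L /r invf_div.
have r_le1 : r <= 1.
  rewrite -invf_ge1 // leNgt; apply/negP => /ltW /ln_le0; rewrite -L_eq; lra.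
have := ln_Kn_mgf_bounds th t n th_gt0 n_gt0; rewrite mulrAC -/r => /andP[lo hi].
have W := phi_mulr_expR_bound _ t r_gt0 r_le1.
have e1 := ln1DV_mulr_le _ _ r_gt0 r_le1 (expR_gt0 t).
have e2 := ln1DV_mulr_le _ _ r_gt0 r_le1 ltr01.
rewrite mulr1 invr1 -L_eq in e2; rewrite -expRN -L_eq in e1.
have e1_ge0 : 0 <= ln (1 + (r * expR t)^-1).
  by rewrite ln_ge0 // lerDl invr_ge0 mulr_ge0 ?expR_ge0 ?ltW.
have e2_ge0 : 0 <= ln (1 + r^-1) by rewrite ln_ge0 // lerDl invr_ge0 ltW.
have c_ge0 : 0 <= ln (1 + expR (- t)) by rewrite ln_ge0 // lerDl expR_ge0.
have ln2_ge0 : 0 <= ln 2 :> R by rewrite ln_ge0 //; lra.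
set C := expR t ^+ 2 + 1 + _ in W *.
have nW : `|n%:R * (phi (r * expR t) - phi r) - th * L * Lambda4 t| <= C * th.
  have -> : th = n%:R * r by rewrite /r; field; rewrite gt_eqF.
  rewrite /Lambda4 L_eq.
  have -> : n%:R * (phi (r * expR t) - phi r) - n%:R * r * ln r^-1 * (expR t - 1)
      = n%:R * (phi (r * expR t) - phi r - r * (expR t - 1) * ln r^-1) by ring.
  have -> : C * (n%:R * r) = n%:R * (C * r) by ring.
  by rewrite normrM gtr0_norm // ler_wpM2l // ltW.
have -> : (ln (1 + expR (- t)) + ln 2) / th / L + th^-1 + C / L
    = (ln (1 + expR (- t)) + ln 2 + L + C * th) / (th * L).
  by field; rewrite !gt_eqF.
apply: ler_dist_div; first exact: mulr_gt0.
by move: nW; rewrite !ler_norml => /andP[? ?]; apply/andP; split; lra.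
Qed.

Lemma Kn_mgf_limit_fast_n (n : R -> nat) :
  ((n theta)%:R : R) @[theta --> +oo] --> +oo ->
  (theta / (n theta)%:R) @[theta --> +oo] --> 0 ->
  forall t : R,
  (ln (Kn_mgf theta (n theta) t) / (theta * ln ((n theta)%:R / theta)))
    @[theta --> +oo] --> Lambda4 t.
Proof.
move=> n_oo r_0 t.
have L_oo : ln ((n theta)%:R / theta) @[theta --> +oo] --> +oo.
  apply: cvgy_ln; under eq_fun do rewrite -invf_div.
  apply/cvgrVy => //; near=> th; apply: divr_gt0.
  - by near: th; exact: nbhs_pinfty_gt.
  - by near: th; exact: cvgry_gt n_oo 0.
apply: (cvg_dist_bound _ (fun th =>
  (ln (1 + expR (- t)) + ln 2) / th / ln ((n th)%:R / th) + th^-1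
  + (expR t ^+ 2 + 1 + `|expR t - 1 - expR t * t|) / ln ((n th)%:R / th))).
  near=> th; apply: ln_Kn_mgf_fast_n.
  - by near: th; exact: nbhs_pinfty_gt.
  - by rewrite -(ltr0n R); near: th; exact: cvgry_gt n_oo 0.
  - by near: th; exact: cvgry_gt L_oo 0.
rewrite -[X in _ --> X](addr0 0) -[X in _ --> X + _](addr0 0).
rewrite -[X in _ --> X + _ + _](mulr0 0).
apply: cvgD; [apply: cvgD; [apply: cvgM|]|]; last exact: cvgy_divr.
- exact/cvgy_divr/cvg_id.
- exact: cvgy_inv.
- exact/cvgy_inv/cvg_id.
Unshelve. all: by end_near.
Qed.

End FastGrowingSampleSize.

Theorem theorem4p1 (R : realType) :
  (* Case A: n fixed *)
  (forall (n : nat), (1 <= n)%N -> forall t : R,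
     (ln (Kn_mgf theta n (ln theta * t)) / ln theta)
       @[theta --> +oo] --> Lambda1 n t)
  /\
  (* Case B: n(theta) -> oo, theta / n(theta) -> oo *)
  (forall (n : R -> nat),
     ((n theta)%:R : R) @[theta --> +oo] --> +oo ->
     (theta / (n theta)%:R) @[theta --> +oo] --> +oo ->
     forall t : R,
     (ln (Kn_mgf theta (n theta) (ln (theta / (n theta)%:R) * t))
        / ((n theta)%:R * ln (theta / (n theta)%:R)))
       @[theta --> +oo] --> Lambda2 t)
  /\
  (* Case C: n(theta) -> oo, theta / n(theta) -> c in (0, oo) *)
  (forall (n : R -> nat) (c : R), 0 < c ->
     ((n theta)%:R : R) @[theta --> +oo] --> +oo ->
     (theta / (n theta)%:R) @[theta --> +oo] --> c ->
     forall t : R,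
     (ln (Kn_mgf theta (n theta) ((theta / (n theta)%:R) * t)) / theta)
       @[theta --> +oo] --> Lambda3 c t)
  /\
  (* Case D: n(theta) -> oo, theta / n(theta) -> 0 *)
  (forall (n : R -> nat),
     ((n theta)%:R : R) @[theta --> +oo] --> +oo ->
     (theta / (n theta)%:R) @[theta --> +oo] --> 0 ->
     forall t : R,
     (ln (Kn_mgf theta (n theta) t) / (theta * ln ((n theta)%:R / theta)))
       @[theta --> +oo] --> Lambda4 t).
Proof.
split; first by move=> n n_gt0 t; exact: Kn_mgf_limit_fixed_n.
split; first exact: Kn_mgf_limit_slow_n.
split; first exact: Kn_mgf_limit_proportional_n.
exact: Kn_mgf_limit_fast_n.
Qed.
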